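(* Let $g\ge2$. The subset of $\overline{\mathcal{M}}_g$ consisting of stable curves whose dual graph admits a $\mathbb{Z}$-emm (respectively, an $\mathbb{R}$-emm) is an open union of strata of $\overline{\mathcal{M}}_g$.
   Context: $\overline{\mathcal{M}}_g$ is the Deligne–Mumford compactification, stratified by dual graphs of stable curves (vertices = components, edges = nodes). For a finite graph $G$ with oriented edges $e_i$, $H_1(G,\mathbb{Z})$ is the cycle group, $H^1(G,\mathbb{Z})$ its dual, and the image of $e_i^*$ in $H^1$ is the coedge $e_i^*$. For $R\in\{\mathbb{Z},\mathbb{R}\}$, an $R$-emm is $q\in\mathrm{Sym}^2H_1(G,R)$, viewed as a quadratic form on $H^1(G,\mathbb{R})$, that is positive definite, satisfies $q(e_i^* )=1$ for each non-bridge edge $e_i$, and $q(v)\ge1$ for all $v\in H^1(G,\mathbb{Z})\setminus0$. *)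

From HB Require Import structures.
From mathcomp Require Import all_boot all_order all_algebra.
From mathcomp Require Import reals.
Set Implicit Arguments. Unset Strict Implicit. Unset Printing Implicit Defensive.
Import Order.TTheory GRing.Theory Num.Theory.
Local Open Scope ring_scope.

(* A finite (multi)graph with loops allowed, oriented edges, and vertex
   genus weights (the dual graph of a stable curve: vertices = components,
   weight = geometric genus of the normalization of the component,
   edges = nodes). *)
Record graph := Graph {
  gV : finType;
  gE : finType;
  src : gE -> gV;
  tgt : gE -> gV;
  wt : gV -> nat }.

Definition joins (G : graph) (e : gE G) (u v : gV G) : bool :=
  ((src e == u) && (tgt e == v)) || ((src e == v) && (tgt e == u)).

Arguments joins : clear implicits.
Arguments joins {G}.
Definition adj_in (G : graph) (S : pred (gE G)) : rel (gV G) :=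
  fun u v => [exists e : gE G, S e && joins e u v].

Definition connected_graph (G : graph) : Prop :=
  forall u v : gV G, connect (@adj_in G predT) u v.

Definition bridge (G : graph) (e : gE G) : bool :=
  ~~ connect (@adj_in G (predC1 e)) (src e) (tgt e).

Definition valence (G : graph) (v : gV G) : nat :=
  #|[pred e : gE G | src e == v]| + #|[pred e : gE G | tgt e == v]|.

(* stable graph of genus g:  g = b_1(G) + sum of weights,
   b_1 = #E - #V + 1 for a connected graph *)
Definition stable_graph (g : nat) (G : graph) : Prop :=
  [/\ (0 < #|gV G|)%N, connected_graph G,
      (forall v : gV G, 3 <= 2 * wt v + valence v)%N &
      (#|gE G| + \sum_(v : gV G) wt v + 1 = g + #|gV G|)%N].

(* H is (isomorphic to) the contraction G/S of G along a set S of edges: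
   vertices of H = connected components of (V G, S), edges of H = edges
   of G outside S, weights of H = sum of weights of the component plus the
   first Betti number of the component.  In M_g-bar, the stratum of G lies
   in the closure of the stratum of H iff H is such a contraction of G. *)
Definition contraction (G H : graph) : Prop :=
  exists (S : pred (gE G)) (phiV : gV G -> gV H) (phiE : gE G -> gE H),
  [/\ forall u : gV H, exists v, phiV v = u,
      forall v v' : gV G, phiV v = phiV v' <-> connect (@adj_in G S) v v',
      forall e e' : gE G, ~~ S e -> ~~ S e' -> phiE e = phiE e' -> e = e',
      forall f : gE H, exists2 e, ~~ S e & phiE e = f &
      forall e : gE G, ~~ S e -> joins (phiE e) (phiV (src e)) (phiV (tgt e))]
  /\ (forall u : gV H,
        (wt u + #|[pred v | phiV v == u]| =
         \sum_(v | phiV v == u) wt v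
         + #|[pred e | S e && (phiV (src e) == u)]| + 1)%N).

Section Forms.
Variables (R : realType) (G : graph).

(* coboundary  delta : R^V -> R^E  (its image is the kernel of R^E -> H^1) *)
Definition cobound (y : gV G -> R) : gE G -> R := fun e => y (tgt e) - y (src e).

(* q in Sym^2 R^E, given by a symmetric matrix Q, as a quadratic form on R^E *)
Definition qf (Q : gE G -> gE G -> R) (x : gE G -> R) : R :=
  \sum_(e : gE G) \sum_(f : gE G) Q e f * x e * x f.

(* indicator of an edge: a representative of the coedge e^* *)
Definition coedge (e : gE G) : gE G -> R := fun f => (f == e)%:R.

Definition intvec (x : gE G -> int) : gE G -> R := fun e => (x e)%:~R.

(* q is an R-emm:
   - q in Sym^2 H_1(G,R): Q symmetric and q descends to H^1 = R^E / im delta;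
   - positive definite on H^1(G,R);
   - q(e^* ) = 1 for every non-bridge edge e;
   - q(v) >= 1 for every nonzero v in H^1(G,Z) = Z^E / delta(Z^V). *)
Definition is_emmR (Q : gE G -> gE G -> R) : Prop :=
  [/\ forall e f, Q e f = Q f e,
      forall (x : gE G -> R) (y : gV G -> R),
        qf Q (fun e => x e + cobound y e) = qf Q x,
      forall x : gE G -> R, (forall y : gV G -> R, x <> cobound y) -> 0 < qf Q x,
      forall e : gE G, ~~ bridge e -> qf Q (coedge e) = 1 &
      forall x : gE G -> int,
        (forall y : gV G -> int, x <> (fun e => y (tgt e) - y (src e))) ->
        1 <= qf Q (intvec x)].

(* Z-emm: additionally q in Sym^2 H_1(G,Z), i.e. q is integer-valued on
   H^1(G,Z) (Sym^2 of a lattice = integer-valued quadratic forms on the dual) *)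
Definition is_emmZ (Q : gE G -> gE G -> R) : Prop :=
  is_emmR Q /\ forall x : gE G -> int, qf Q (intvec x) \is a Num.int.

Definition has_Remm : Prop := exists Q, is_emmR Q.
Definition has_Zemm : Prop := exists Q, is_emmZ Q.

End Forms.

From HB Require Import structures.
From mathcomp Require Import all_boot all_order all_algebra.
From mathcomp Require Import reals.
From mathcomp Require Import ring.
From Stdlib Require Import FunctionalExtensionality.
Set Implicit Arguments. Unset Strict Implicit. Unset Printing Implicit Defensive.
Import Order.TTheory GRing.Theory Num.Theory.
Local Open Scope ring_scope.

(* If H = G/S, the edges of H are the edges of G outside S, so H^1(H) embeds
   into H^1(G) by extending a cochain by zero on S (with a sign correcting the
   orientation of each edge).  Restricting an emm q of G along this embedding
   gives an emm of H: the extension of a non-coboundary is a non-coboundary,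
   it preserves integrality, and a non-bridge of H is a non-bridge of G, so
   every defining condition of q restricts.  No stability is needed. *)

Lemma adj_in_sym (K : graph) (S : pred (gE K)) : connect_sym (adj_in S).
Proof.
apply: sym_connect_sym => u v.
by apply/existsP/existsP => -[e /andP[Se j]]; exists e; rewrite Se /joins orbC.
Qed.

Lemma connect_adj_in_const (K : graph) (S : pred (gE K)) (T : Type)
    (y : gV K -> T) :
  (forall e, S e -> y (src e) = y (tgt e)) ->
  forall v v', connect (adj_in S) v v' -> y v = y v'.
Proof.
move=> yS v v' /connectP[p]; elim: p v => [|w p IHp] v /=; first by move=> _ ->.
case/andP=> /existsP[e /andP[Se j]] wp v'l; rewrite -(IHp w wp v'l).
by case/orP: j => /andP[/eqP <- /eqP <-]; rewrite yS.
Qed.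

Lemma qf_coedge (R : realType) (K : graph) (Q : gE K -> gE K -> R) e :
  qf Q (coedge R e) = Q e e.
Proof.
rewrite /qf (bigD1 e) //= [X in _ + X]big1 ?addr0 => [|i ie]; last first.
  by apply: big1 => j _; rewrite /coedge (negbTE ie) mulr0 mul0r.
rewrite (bigD1 e) //= [X in _ + X]big1 ?addr0 => [|j je]; last first.
  by rewrite /coedge (negbTE je) mulr0.
by rewrite /coedge eqxx !mulr1.
Qed.

Lemma eq_qf (R : realType) (K : graph) (Q : gE K -> gE K -> R) u v :
  u =1 v -> qf Q u = qf Q v.
Proof. by move=> uv; apply: eq_bigr => e _; apply: eq_bigr => f _; rewrite !uv. Qed.

Section Contraction.
Variables (G H : graph) (S : pred (gE G)) (phiV : gV G -> gV H)
  (phiE : gE G -> gE H) (lift : gE H -> gE G) (rep : gV H -> gV G).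
Hypotheses (phiV_eq : forall v v', phiV v = phiV v' <-> connect (adj_in S) v v')
  (phiE_inj : forall e e', ~~ S e -> ~~ S e' -> phiE e = phiE e' -> e = e')
  (phiE_joins : forall e, ~~ S e -> joins (phiE e) (phiV (src e)) (phiV (tgt e)))
  (liftP : forall f, ~~ S (lift f) /\ phiE (lift f) = f)
  (repK : forall u, phiV (rep u) = u).

Lemma lift_notin f : ~~ S (lift f). Proof. exact: (liftP f).1. Qed.
Lemma liftK f : phiE (lift f) = f. Proof. exact: (liftP f).2. Qed.

Lemma phiEK e : ~~ S e -> lift (phiE e) = e.
Proof. by move=> Se; apply: phiE_inj; rewrite ?lift_notin ?liftK. Qed.

Lemma phiV_contracted e : S e -> phiV (src e) = phiV (tgt e).
Proof.
by move=> Se; apply/phiV_eq/connect1/existsP; exists e; rewrite Se /joins !eqxx.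
Qed.

Lemma lift_ends_same f : phiV (src (lift f)) = src f ->
  phiV (tgt (lift f)) = tgt f.
Proof.
move=> s; have := phiE_joins (lift_notin f); rewrite liftK s /joins.
by case/orP=> /andP[/eqP a /eqP b]; rewrite -?a b.
Qed.

Lemma lift_ends_flip f : phiV (src (lift f)) != src f ->
  phiV (src (lift f)) = tgt f /\ phiV (tgt (lift f)) = src f.
Proof.
move=> s; have := phiE_joins (lift_notin f); rewrite liftK /joins.
by case/orP=> /andP[/eqP a /eqP b]; [rewrite a eqxx in s | rewrite a b].
Qed.

Lemma lift_joins f u w : joins f u w ->
  exists a b, [/\ joins (lift f) a b, phiV a = u & phiV b = w].
Proof.
have [s|s] := eqVneq (phiV (src (lift f))) (src f).
  have t := lift_ends_same s.
  case/orP=> /andP[/eqP <- /eqP <-].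
    by exists (src (lift f)), (tgt (lift f)); rewrite /joins !eqxx.
  by exists (tgt (lift f)), (src (lift f)); rewrite /joins !eqxx orbT.
have [s' t'] := lift_ends_flip s.
case/orP=> /andP[/eqP <- /eqP <-].
  by exists (tgt (lift f)), (src (lift f)); rewrite /joins !eqxx orbT.
by exists (src (lift f)), (tgt (lift f)); rewrite /joins !eqxx.
Qed.

Definition orient_sign (K : pzRingType) f : K :=
  if phiV (src (lift f)) == src f then 1 else -1.

Lemma orient_sign_sqr (K : pzRingType) f : orient_sign K f * orient_sign K f = 1.
Proof. by rewrite /orient_sign; case: ifP; rewrite ?mulr1 ?mulrNN ?mulr1. Qed.

Definition extend (K : pzRingType) (x : gE H -> K) e : K :=
  if S e then 0 else orient_sign K (phiE e) * x (phiE e).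

Lemma extend_lift (K : pzRingType) (x : gE H -> K) f :
  extend x (lift f) = orient_sign K f * x f.
Proof. by rewrite /extend (negbTE (lift_notin f)) liftK. Qed.

Lemma extend_cobound (K : comPzRingType) (x : gE H -> K) (y : gV H -> K) e :
  extend (fun f => x f + (y (tgt f) - y (src f))) e =
  extend x e + (y (phiV (tgt e)) - y (phiV (src e))).
Proof.
rewrite /extend; case: ifP => Se; first by rewrite phiV_contracted // subrr addr0.
have le : lift (phiE e) = e by rewrite phiEK ?Se.
rewrite /orient_sign; case: ifP => [/eqP s | /negbT s].
  by have t := lift_ends_same s; rewrite le in s t; rewrite -s -t; ring.
by have [a b] := lift_ends_flip s; rewrite le in a b; rewrite -a -b; ring.
Qed.

(* [y] is constant on the fibres of [phiV] because [extend x] vanishes on [S]. *)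
Lemma cobound_of_extend (K : comPzRingType) (x : gE H -> K) (y : gV G -> K) :
  (forall e, extend x e = y (tgt e) - y (src e)) ->
  forall f, x f = y (rep (tgt f)) - y (rep (src f)).
Proof.
move=> xy.
have yrep v : y v = y (rep (phiV v)).
  apply: (connect_adj_in_const (S := S)); last by apply/phiV_eq; rewrite repK.
  by move=> e Se; apply/eqP; rewrite eq_sym -subr_eq0 -xy /extend Se.
move=> f; have := xy (lift f); rewrite extend_lift 2![y (_ (lift f))]yrep.
rewrite /orient_sign; case: ifP => [/eqP s | /negbT s].
  by rewrite (lift_ends_same s) s mul1r.
have [-> ->] := lift_ends_flip s.
by move=> h; apply: oppr_inj; rewrite -mulN1r h opprB.
Qed.

Lemma extend_noncobound (K : comPzRingType) (x : gE H -> K) :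
  (forall y : gV H -> K, x <> (fun f => y (tgt f) - y (src f))) ->
  forall y : gV G -> K, extend x <> (fun e => y (tgt e) - y (src e)).
Proof.
move=> xnc y xy; apply: (xnc (y \o rep)); apply: functional_extensionality.
by apply: cobound_of_extend => e; rewrite xy.
Qed.

Lemma connect_fibre v v' e : ~~ S e ->
  phiV v = phiV v' -> connect (adj_in (predC1 e)) v v'.
Proof.
move=> Se /phiV_eq; apply: connect_sub => a b /existsP[e' /andP[Se' j]].
apply/connect1/existsP; exists e'; rewrite j andbT /=.
by apply: contraNneq Se => <-.
Qed.

Lemma connect_lift f u w : connect (adj_in (predC1 f)) u w ->
  forall v v', phiV v = u -> phiV v' = w ->
  connect (adj_in (predC1 (lift f))) v v'.
Proof.
move=> /connectP[p]; elim: p u => [|w1 p IHp] u /=.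
  by move=> _ -> v v' <- vw; apply: connect_fibre (lift_notin f) _.
case/andP=> /existsP[f' /andP[f'f j]] pw1 pl v v' vu v'w.
have [a [b [jab au bw1]]] := lift_joins j.
apply: connect_trans (connect_fibre (lift_notin f) (_ : phiV v = phiV a)) _.
  by rewrite vu au.
apply: connect_trans (IHp _ pw1 pl b v' bw1 v'w).
apply/connect1/existsP; exists (lift f'); rewrite jab andbT /=.
by apply: contra f'f => /eqP /(congr1 phiE); rewrite !liftK => ->.
Qed.

Lemma lift_nonbridge f : ~~ bridge f -> ~~ bridge (lift f).
Proof.
rewrite /bridge !negbK => fc.
have [s|s] := eqVneq (phiV (src (lift f))) (src f).
  exact: connect_lift fc _ _ s (lift_ends_same s).
have [s' t'] := lift_ends_flip s.
by rewrite adj_in_sym; apply: connect_lift fc _ _ t' s'.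
Qed.

Variable R : realType.

Definition contr_form (Q : gE G -> gE G -> R) f f' : R :=
  orient_sign R f * orient_sign R f' * Q (lift f) (lift f').

Lemma sum_lift (F : gE G -> R) : (forall e, S e -> F e = 0) ->
  \sum_e F e = \sum_f F (lift f).
Proof.
move=> F0; rewrite (bigID S) /= big1 ?add0r //.
rewrite (reindex_onto lift phiE) => [|e]; last exact: phiEK.
by apply: eq_bigl => f; rewrite lift_notin liftK eqxx.
Qed.

Lemma qf_contr_form Q x : qf (contr_form Q) x = qf Q (extend x).
Proof.
rewrite /qf sum_lift => [|e Se]; last first.
  by apply: big1 => e' _; rewrite /extend Se mulr0 mul0r.
apply: eq_bigr => f _; rewrite sum_lift => [|e Se]; last by rewrite /extend Se mulr0.
by apply: eq_bigr => f' _; rewrite !extend_lift /contr_form; ring.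
Qed.

Lemma intvec_extend (x : gE H -> int) : intvec R (extend x) =1 extend (intvec R x).
Proof.
move=> e; rewrite /intvec /extend; case: (S e) => //.
by rewrite intrM /orient_sign; case: ifP.
Qed.

Lemma is_emmR_contr_form Q : is_emmR Q -> is_emmR (contr_form Q).
Proof.
case=> Qsym Qinv Qpos Qcoedge Qint; split.
- by move=> f f'; rewrite /contr_form Qsym; ring.
- move=> x y; rewrite !qf_contr_form (eq_qf _ (extend_cobound x y)).
  exact: (Qinv _ (y \o phiV)).
- move=> x xnc; rewrite qf_contr_form; apply: Qpos.
  exact: extend_noncobound.
- move=> f /lift_nonbridge nb.
  by rewrite qf_coedge /contr_form orient_sign_sqr mul1r -qf_coedge Qcoedge.
- move=> x xnc; rewrite qf_contr_form -(eq_qf _ (intvec_extend x)).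
  exact/Qint/extend_noncobound.
Qed.

Lemma is_emmZ_contr_form Q : is_emmZ Q -> is_emmZ (contr_form Q).
Proof.
case=> /is_emmR_contr_form QR QZ; split=> // x.
by rewrite qf_contr_form -(eq_qf _ (intvec_extend x)).
Qed.

End Contraction.

Theorem lemma3p9 (g : nat) (hg : (2 <= g)%N) (R : realType) (G H : graph) :
  stable_graph g G -> stable_graph g H -> contraction G H ->
  (has_Zemm R G -> has_Zemm R H) /\ (has_Remm R G -> has_Remm R H).
Proof.
move=> _ _ [S [phiV [phiE [[phiV_onto phiV_eq phiE_inj phiE_onto phiE_joins] _]]]].
have [lift liftP] : exists lift : gE H -> gE G,
    forall f, ~~ S (lift f) /\ phiE (lift f) = f.
  apply: (fin_all_exists (U := fun _ => gE G)
            (P := fun f e => ~~ S e /\ phiE e = f)) => f.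
  by case: (phiE_onto f) => e; exists e.
have [rep repK] : exists rep : gV H -> gV G, forall u, phiV (rep u) = u.
  exact: (fin_all_exists (U := fun _ => gV G) (P := fun u v => phiV v = u) phiV_onto).
have contr_emm := is_emmR_contr_form phiV_eq phiE_inj phiE_joins liftP repK.
have contr_emmZ := is_emmZ_contr_form phiV_eq phiE_inj phiE_joins liftP repK.
split=> -[Q emmQ]; exists (contr_form phiV lift Q).
  exact: contr_emmZ.
exact: contr_emm.
Qed.
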